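(* Let $m \geq 2$ be an integer and let $p=(p_1,\dots,p_m)$ be a probability distribution on $\{1,\dots,m\}$. Throw balls one at a time independently into $m$ bins, each ball landing in bin $i$ with probability $p_i$. Let $k \geq 1$ be an integer and let $T_k$ be the number of balls thrown until some bin first contains $k$ balls. Define $n^* = \frac{k}{\|p\|_k}$, where $\|p\|_k = \left(\sum_{i=1}^m p_i^k\right)^{1/k}$. Then for every $\delta \in (0,1)$: \[ \Pr\left[T_k \leq \left(\tfrac{\delta}{e}\right) n^*\right] \leq \delta \] and \[ \Pr\left[T_k \leq \max\left\{e^2,\ 2\ln(\tfrac{1}{\delta})\right\} n^*\right] \geq 1-\delta. \]
   Context: Equivalently, $T_k$ is the smallest $n$ such that after $n$ balls the maximum load over all bins is at least $k$. *)

From HB Require Import structures.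
From mathcomp Require Import all_boot all_order all_algebra.
From mathcomp Require Import all_classical all_reals all_analysis.
Set Implicit Arguments. Unset Strict Implicit. Unset Printing Implicit Defensive.
Import Order.TTheory GRing.Theory Num.Theory.
Local Open Scope ring_scope.

(* Balls into bins: an outcome of throwing n balls into m bins is a function
   f : 'I_n -> 'I_m (ball j lands in bin f j); its probability is
   \prod_j p (f j) (independent throws). *)

Definition load (m n : nat) (f : {ffun 'I_n -> 'I_m}) (i : 'I_m) : nat :=
  #|[set j | f j == i]|.

(* Pr[ max load after n balls >= k ]  =  Pr[ T_k <= n ] *)
Definition prob_maxload_ge (R : realType) (m : nat) (p : 'I_m -> R) (k n : nat) : R :=
  \sum_(f : {ffun 'I_n -> 'I_m} | [exists i, k <= load f i]%N) \prod_(j < n) p (f j).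

(* Pr[ T_k <= x ] for a real threshold x: since T_k is a positive integer,
   T_k <= x  iff  T_k <= floor x (and is impossible for x < 1 when k >= 1;
   truncn x = 0 for x < 0). *)
Definition prob_Tk_le (R : realType) (m : nat) (p : 'I_m -> R) (k : nat) (x : R) : R :=
  prob_maxload_ge p k (Num.truncn x).

Definition knorm (R : realType) (m : nat) (p : 'I_m -> R) (k : nat) : R :=
  powR (\sum_(i < m) p i ^+ k) (k%:R)^-1.

Definition nstar (R : realType) (m : nat) (p : 'I_m -> R) (k : nat) : R :=
  k%:R / knorm p k.

(* Lower tail: by the union bound over the bins,
   Pr[T_k <= n] <= C(n, k) sum_i p_i^k <= (n ||p||_k)^k / k!, which at
   n = (delta/e) n* is (delta/e)^k k^k / k! <= delta^k.
   Upper tail (Poissonization): the exponential generating function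
   sum_N Pr[T_k > N] t^N / N! factors as prod_i E(p_i t), where E is the
   exponential series truncated below degree k.  As Pr[T_k > N] decreases in N
   and the truncated series of e^t up to degree n already exceeds e^t / 4 when
   t <= 3(n+1)/4, Pr[T_k > n] <= 4 e^-t prod_i E(p_i t) = 4 exp(- sum_i g(p_i t))
   with g(y) = y - ln E(y).  Since g(y) / y^k is nonincreasing and
   g(y) >= (1 - 1/e) y - (k - 1), the sum is at least
   (1 - 1/e) t ||p||_k - (k - 1), which for t = (3/4) c n*,
   c = max(e^2, 2 ln(1/delta)), exceeds c/2 + 2. *)
From HB Require Import structures.
From mathcomp Require Import all_boot all_order all_algebra.
From mathcomp Require Import all_classical all_reals all_analysis.
From mathcomp Require Import zify ring lra.
Import Order.TTheory GRing.Theory Num.Theory.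
Set Implicit Arguments. Unset Strict Implicit. Unset Printing Implicit Defensive.
Local Open Scope ring_scope.

Lemma deriv_prod (R : nzSemiRingType) n (F : 'I_n -> {poly R}) :
  (\prod_(i < n) F i)^`() =
  \sum_(i < n) \prod_(j < n) (if j == i then (F j)^`() else F j).
Proof.
elim: n F => [|n IHn] F; first by rewrite !big_ord0 derivC.
rewrite big_ord_recr derivM IHn [RHS]big_ord_recr /= mulr_suml.
have lift_neq_max (i : 'I_n) : (widen_ord (leqnSn n) i == ord_max) = false.
  by apply/negbTE; rewrite neq_ltn /= ltn_ord.
congr (_ + _); last first.
  by rewrite big_ord_recr /= eqxx; congr (_ * _); apply: eq_bigr => j _; rewrite lift_neq_max.
by apply: eq_bigr => i _; rewrite [in RHS]big_ord_recr /= eq_sym lift_neq_max.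
Qed.

Section TruncatedExponential.
Variable R : numFieldType.

Definition exp_trunc (y : R) (N : nat) : R := \sum_(l < N) y ^+ l / l`!%:R.

Lemma exp_truncS (y : R) N : exp_trunc y N.+1 = exp_trunc y N + y ^+ N / N`!%:R.
Proof. by rewrite /exp_trunc big_ord_recr. Qed.

Lemma exp_term_ge0 (y : R) l : 0 <= y -> 0 <= y ^+ l / l`!%:R.
Proof. by move=> y_ge0; apply: divr_ge0; [apply: exprn_ge0|]. Qed.

Lemma exp_trunc_ge0 (y : R) N : 0 <= y -> 0 <= exp_trunc y N.
Proof. by move=> y_ge0; apply: sumr_ge0 => l _; apply: exp_term_ge0. Qed.

Lemma exp_trunc_ge1 (y : R) N : 0 <= y -> 1 <= exp_trunc y N.+1.
Proof.
move=> y_ge0; rewrite /exp_trunc big_ord_recl expr0 fact0 divr1 lerDl.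
by apply: sumr_ge0 => l _; apply: exp_term_ge0.
Qed.

Lemma exp_trunc_gt0 (y : R) N : 0 <= y -> 0 < exp_trunc y N.+1.
Proof. by move=> y_ge0; apply: lt_le_trans ltr01 (exp_trunc_ge1 _ y_ge0). Qed.

Lemma exp_trunc0 N : exp_trunc 0 N.+1 = 1.
Proof.
rewrite /exp_trunc big_ord_recl expr0 fact0 divr1 big1 ?addr0 // => l _.
by rewrite expr0n mul0r.
Qed.

Lemma exp_trunc_homo (y : R) : 0 <= y -> {homo exp_trunc y : M N / (M <= N)%N >-> M <= N}.
Proof.
move=> y_ge0 M N /subnK <-; elim: (N - M)%N => [|d IHd]; first by rewrite add0n.
by rewrite addSn exp_truncS (le_trans IHd) // lerDl exp_term_ge0.
Qed.

Definition exp_poly (a : R) (N : nat) : {poly R} := \poly_(l < N) (a ^+ l / l`!%:R).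

Lemma horner_exp_poly (a : R) N t : (exp_poly a N).[t] = exp_trunc (a * t) N.
Proof.
by rewrite horner_poly; apply: eq_bigr => l _; rewrite exprMn mulrAC.
Qed.

Lemma deriv_exp_poly (a : R) N : (exp_poly a N)^`() = a *: exp_poly a N.-1.
Proof.
apply/polyP => j; rewrite coef_deriv coefZ !coef_poly.
case: N => [|N] /=; first by rewrite mulr0 mul0rn.
rewrite ltnS; case: ltnP => _; last by rewrite mulr0 mul0rn.
have fact_neq0 : j`!%:R != 0 :> R by rewrite pnatr_eq0 -lt0n fact_gt0.
rewrite factS natrM exprS -mulr_natr -[j.+1%:R]natr1.
by field; rewrite fact_neq0 natr1 pnatr_eq0.
Qed.

End TruncatedExponential.

Section TruncatedExpR.
Variable R : realType.

Lemma exp_trunc_series (y : R) N : exp_trunc y N = series (exp_coeff y) N.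
Proof. by rewrite /exp_trunc /series /exp_coeff /= big_mkord. Qed.

Lemma exp_trunc_le_expR (y : R) N : 0 <= y -> exp_trunc y N <= expR y.
Proof.
move=> y_ge0; rewrite exp_trunc_series /expR.
apply: nondecreasing_cvgn_le; last exact: is_cvg_series_exp_coeff.
by move=> M N' le_MN; rewrite -!exp_trunc_series exp_trunc_homo.
Qed.

(* Beyond index n the terms of the exponential series decrease at least
   geometrically with ratio 3/4, so the tail is at most three times the last
   term kept. *)
Lemma expR_le_4exp_trunc (t : R) n :
  0 <= t -> t <= 3/4 * n.+1%:R -> expR t <= 4 * exp_trunc t n.+1.
Proof.
move=> t_ge0 t_le.
pose a l := t ^+ l / l`!%:R.
have a_ge0 l : 0 <= a l by apply: exp_term_ge0.
have a_ratio l : (n <= l)%N -> 4 * a l.+1 <= 3 * a l.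
  move=> le_nl.
  have fact_gt0 : 0 < l`!%:R :> R by rewrite ltr0n fact_gt0.
  have tl : t <= 3/4 * l.+1%:R.
    by apply: le_trans t_le _; rewrite ler_pM2l ?ler_nat //; lra.
  have -> : a l.+1 = t / l.+1%:R * a l.
    rewrite /a exprS factS natrM -[l.+1%:R]natr1.
    by field; rewrite natr1 (lt0r_neq0 fact_gt0) pnatr_eq0.
  by rewrite mulrA; apply: ler_wpM2r => //; rewrite mulrA ler_pdivrMr ?ltr0Sn //; lra.
have tail j : exp_trunc t (n + j).+1 + 3 * a (n + j)%N <= exp_trunc t n.+1 + 3 * a n.
  elim: j => [|j IHj]; first by rewrite !addn0.
  rewrite addnS exp_truncS -/(a _); have := a_ratio (n + j)%N (leq_addr _ _); lra.
rewrite /expR; apply: limr_le; first exact: is_cvg_series_exp_coeff.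
exists n.+1 => // N /= le_nN; rewrite -exp_trunc_series.
have [j ->] : exists j, N = (n + j).+1 by exists (N - n.+1)%N; lia.
have := exp_truncS t n; have := tail j; have := a_ge0 (n + j)%N.
have := exp_trunc_ge0 n t_ge0; rewrite /a; lra.
Qed.

Lemma expR1_ge : 27/10 <= expR 1 :> R.
Proof.
apply: le_trans (exp_trunc_le_expR 5 ler01).
by rewrite /exp_trunc !big_ord_recr big_ord0 /= !expr1n !factS fact0 /=; lra.
Qed.

Lemma is_derive_exp_trunc (x : R) (N : nat) :
  is_derive x 1 (fun y : R => exp_trunc y N.+1) (exp_trunc x N).
Proof.
have -> : (fun y : R => exp_trunc y N.+1) = horner (exp_poly 1 N.+1).
  by apply/funext => y; rewrite horner_exp_poly mul1r.
have := is_derive_poly (exp_poly 1 N.+1) x.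
by rewrite deriv_exp_poly hornerZ horner_exp_poly !mul1r.
Qed.

End TruncatedExpR.

Section BallsIntoBins.
Variables (R : realType) (m : nat) (p : 'I_m -> R).
Hypothesis p_ge0 : forall i, 0 <= p i.
Hypothesis p_sum1 : \sum_(i < m) p i = 1.

Lemma prob_ffun_ge0 n (f : {ffun 'I_n -> 'I_m}) : 0 <= \prod_(j < n) p (f j).
Proof. exact: prodr_ge0. Qed.

Lemma sum_prob_ffun n : \sum_(f : {ffun 'I_n -> 'I_m}) \prod_(j < n) p (f j) = 1.
Proof.
rewrite -(bigA_distr_bigA (fun (j : 'I_n) (i : 'I_m) => p i)) /=.
by rewrite big1 // => j _; rewrite p_sum1.
Qed.

Lemma loadE n (f : {ffun 'I_n -> 'I_m}) i : load f i = (\sum_(j < n) (f j == i))%N.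
Proof. by rewrite /load cardsE -sum1_card big_mkcond. Qed.

Definition ffun_cons n (i : 'I_m) (g : {ffun 'I_n -> 'I_m}) : {ffun 'I_n.+1 -> 'I_m} :=
  [ffun j => if unlift ord0 j is Some j' then g j' else i].

Definition ffun_behead n (f : {ffun 'I_n.+1 -> 'I_m}) : {ffun 'I_n -> 'I_m} :=
  [ffun j => f (lift ord0 j)].

Lemma ffun_cons0 n i (g : {ffun 'I_n -> 'I_m}) : ffun_cons i g ord0 = i.
Proof. by rewrite ffunE unlift_none. Qed.

Lemma ffun_consS n i (g : {ffun 'I_n -> 'I_m}) j : ffun_cons i g (lift ord0 j) = g j.
Proof. by rewrite ffunE liftK. Qed.

Lemma ffun_consK n i : cancel (@ffun_cons n i) (@ffun_behead n).
Proof. by move=> g; apply/ffunP => j; rewrite ffunE ffun_consS. Qed.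

Lemma ffun_behead_cons n (f : {ffun 'I_n.+1 -> 'I_m}) :
  ffun_cons (f ord0) (ffun_behead f) = f.
Proof. by apply/ffunP => j; rewrite ffunE; case: unliftP => [j' ->|->] //; rewrite ffunE. Qed.

Lemma load_ffun_cons n i (g : {ffun 'I_n -> 'I_m}) i' :
  load (ffun_cons i g) i' = ((i == i') + load g i')%N.
Proof.
rewrite !loadE big_ord_recl ffun_cons0; congr (_ + _)%N.
by apply: eq_bigr => j _; rewrite ffun_consS.
Qed.

Definition loads_lt n (cap : 'I_m -> nat) (f : {ffun 'I_n -> 'I_m}) :=
  [forall i, load f i < cap i]%N.

Definition prob_loads_lt n cap :=
  \sum_(f : {ffun 'I_n -> 'I_m} | loads_lt cap f) \prod_(j < n) p (f j).

Definition decr_cap (i : 'I_m) (cap : 'I_m -> nat) (i' : 'I_m) : nat :=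
  if i' == i then (cap i').-1 else cap i'.

Lemma loads_lt_cons n cap i (g : {ffun 'I_n -> 'I_m}) :
  loads_lt cap (ffun_cons i g) = loads_lt (decr_cap i cap) g.
Proof.
apply: eq_forallb => i'; rewrite load_ffun_cons /decr_cap eq_sym.
by case: eqP => [->|_]; rewrite ?add0n //; lia.
Qed.

Lemma prob_loads_ltS n cap :
  prob_loads_lt n.+1 cap = \sum_(i < m) p i * prob_loads_lt n (decr_cap i cap).
Proof.
rewrite /prob_loads_lt (partition_big (fun f : {ffun 'I_n.+1 -> 'I_m} => f ord0) xpredT) //=.
apply: eq_bigr => i _; rewrite mulr_sumr.
rewrite (reindex_onto (@ffun_cons n i) (@ffun_behead n)); last first.
  by move=> f /andP[_ /eqP <-]; rewrite ffun_behead_cons.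
apply: eq_big => [g|g _].
  by rewrite loads_lt_cons ffun_cons0 ffun_consK !eqxx !andbT.
by rewrite big_ord_recl ffun_cons0; congr (_ * _); apply: eq_bigr => j _; rewrite ffun_consS.
Qed.

Lemma prob_loads_lt_ge0 n cap : 0 <= prob_loads_lt n cap.
Proof. by apply: sumr_ge0 => f _; apply: prob_ffun_ge0. Qed.

Lemma prob_loads_lt_le_cap n cap cap' :
  (forall i, cap i <= cap' i)%N -> prob_loads_lt n cap <= prob_loads_lt n cap'.
Proof.
move=> le_cap; rewrite /prob_loads_lt [leRHS]big_mkcond [leLHS]big_mkcond.
apply: ler_sum => f _; case: ifPn => [lt_cap|_]; last by case: ifP => // _; apply: prob_ffun_ge0.
suff -> : loads_lt cap' f by [].
by apply/forallP => i; apply: leq_trans (le_cap i); apply: (forallP lt_cap).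
Qed.

Lemma prob_loads_lt_le n N cap : (N <= n)%N -> prob_loads_lt n cap <= prob_loads_lt N cap.
Proof.
move=> /subnK <-; elim: (n - N)%N => [|d IHd]; first by rewrite add0n.
apply: le_trans IHd; rewrite addSn prob_loads_ltS -[leRHS]mul1r -p_sum1 mulr_suml.
apply: ler_sum => i _; apply: ler_wpM2l => //; apply: prob_loads_lt_le_cap => i'.
by rewrite /decr_cap; case: ifP => // _; apply: leq_pred.
Qed.

Lemma prob_maxload_geE k n : prob_maxload_ge p k n = 1 - prob_loads_lt n (fun=> k).
Proof.
pose full (f : {ffun 'I_n -> 'I_m}) := [exists i, k <= load f i]%N.
have -> : prob_loads_lt n (fun=> k) = \sum_(f | ~~ full f) \prod_(j < n) p (f j).
  by apply: eq_bigl => f; rewrite negb_exists; apply: eq_forallb => i; rewrite -ltnNge.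
by rewrite -{1}(sum_prob_ffun n) (bigID full) /= addrK.
Qed.

Lemma prob_loads_lt0 cap : prob_loads_lt 0 cap = [forall i, 0 < cap i]%N%:R.
Proof.
have loads0 (f : {ffun 'I_0 -> 'I_m}) : loads_lt cap f = [forall i, 0 < cap i]%N.
  by apply: eq_forallb => i; rewrite loadE big_ord0.
rewrite /prob_loads_lt; under eq_bigl do rewrite loads0.
case: [forall i, _]; last by rewrite big_pred0.
under eq_bigr do rewrite big_ord0.
by rewrite sumr_const card_ffun !card_ord expn0.
Qed.

Lemma prob_loads_lt_le1 n : prob_loads_lt n.+1 (fun=> 1%N) = 0.
Proof.
rewrite prob_loads_ltS; apply: big1 => i _; rewrite /prob_loads_lt big_pred0 ?mulr0 // => f.
by apply/negbTE; rewrite negb_forall; apply/existsP; exists i; rewrite /decr_cap eqxx.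
Qed.

Definition loads_egf cap : {poly R} := \prod_(i < m) exp_poly (p i) (cap i).

Lemma horner_loads_egf cap t :
  (loads_egf cap).[t] = \prod_(i < m) exp_trunc (p i * t) (cap i).
Proof. by rewrite horner_prod; apply: eq_bigr => i _; rewrite horner_exp_poly. Qed.

Lemma deriv_loads_egf cap :
  (loads_egf cap)^`() = \sum_(i < m) p i *: loads_egf (decr_cap i cap).
Proof.
rewrite /loads_egf deriv_prod; apply: eq_bigr => i _.
under eq_bigr do rewrite deriv_exp_poly.
rewrite (bigD1 i) //= eqxx [in RHS](bigD1 i) //= /decr_cap eqxx -scalerAl.
by congr (_ *: (_ * _)); apply: eq_bigr => j /negbTE ->.
Qed.

Lemma coef_loads_egf cap N : (loads_egf cap)`_N = prob_loads_lt N cap / N`!%:R.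
Proof.
elim: N cap => [|N IHN] cap.
  rewrite fact0 divr1 -horner_coef0 horner_loads_egf prob_loads_lt0.
  under eq_bigr do rewrite mulr0.
  have [pos|] := boolP [forall i, 0 < cap i]%N.
    by apply: big1 => i _; rewrite -(prednK (forallP pos i)) exp_trunc0.
  rewrite negb_forall => /existsP[i]; rewrite -eqn0Ngt => /eqP cap_i0.
  by rewrite (bigD1 i) //= cap_i0 /exp_trunc big_ord0 mul0r.
have := coef_deriv (loads_egf cap) N.
rewrite deriv_loads_egf coef_sum.
under eq_bigr do rewrite coefZ IHN mulrA.
rewrite -mulr_suml -prob_loads_ltS => coefS.
have fact_neq0 : N`!%:R != 0 :> R by rewrite pnatr_eq0 -lt0n fact_gt0.
have Sn_neq0 : N.+1%:R != 0 :> R by rewrite pnatr_eq0.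
apply: (mulIf Sn_neq0); rewrite mulr_natr -coefS factS natrM.
by field; rewrite fact_neq0 nat1r.
Qed.

Lemma prob_loads_lt_mul_exp_trunc_le cap n t : 0 <= t ->
  prob_loads_lt n cap * exp_trunc t n.+1 <= \prod_(i < m) exp_trunc (p i * t) (cap i).
Proof.
move=> t_ge0; set M := maxn (size (loads_egf cap)) n.+1.
rewrite -horner_loads_egf (@horner_coef_wide _ M) ?leq_maxl // /exp_trunc mulr_sumr.
rewrite (big_ord_widen M (fun N => prob_loads_lt n cap * (t ^+ N / N`!%:R))) ?leq_maxr //.
rewrite big_mkcond /=; apply: ler_sum => N _; rewrite coef_loads_egf.
case: ifP => [lt_Nn|_]; last first.
  by apply: mulr_ge0; [apply: divr_ge0; [apply: prob_loads_lt_ge0|]|apply: exprn_ge0].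
rewrite -[leRHS]mulrA [_^-1 * _]mulrC.
by apply: ler_wpM2r; [apply: exp_term_ge0|apply: prob_loads_lt_le].
Qed.

Lemma prob_subset_bin n (i : 'I_m) (S : {set 'I_n}) :
  \sum_(f : {ffun 'I_n -> 'I_m}) (S \subset [set j | f j == i])%:R * \prod_(j < n) p (f j)
  = p i ^+ #|S|.
Proof.
pose w (j : 'I_n) (x : 'I_m) := if j \in S then (x == i)%:R * p x else p x.
transitivity (\sum_(f : {ffun 'I_n -> 'I_m}) \prod_(j < n) w j (f j)).
  apply: eq_bigr => f _; case: (boolP (S \subset _)) => [sub_S|].
    rewrite mul1r; apply: eq_bigr => j _; rewrite /w; case: ifP => // jS.
    by move/fintype.subsetP: sub_S => /(_ j jS); rewrite inE => ->; rewrite mul1r.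
  case/subsetPn => j jS; rewrite inE => /negbTE fj_neq.
  by rewrite mul0r (bigD1 j) //= /w jS fj_neq !mul0r.
rewrite -(bigA_distr_bigA w) /=.
transitivity (\prod_(j < n) (if j \in S then p i else 1)).
  apply: eq_bigr => j _; rewrite /w; case: ifP => jS; last by rewrite p_sum1.
  rewrite (bigD1 i) //= eqxx mul1r big1 ?addr0 // => x /negbTE ->.
  by rewrite mul0r.
by rewrite -big_mkcond prodr_const.
Qed.

Lemma prob_load_ge_le (i : 'I_m) k n :
  \sum_(f : {ffun 'I_n -> 'I_m} | (k <= load f i)%N) \prod_(j < n) p (f j)
  <= 'C(n, k)%:R * p i ^+ k.
Proof.
pose covers (f : {ffun 'I_n -> 'I_m}) (S : {set 'I_n}) := S \subset [set j | f j == i].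
apply: (@le_trans _ _ (\sum_(f : {ffun 'I_n -> 'I_m})
    \sum_(S : {set 'I_n} | #|S| == k) (covers f S)%:R * \prod_(j < n) p (f j))).
  rewrite big_mkcond /=; apply: ler_sum => f _; case: ifP => [k_le|_]; last first.
    by apply: sumr_ge0 => S _; apply: mulr_ge0 => //; apply: prob_ffun_ge0.
  pose S := [set x in take k (enum [set j | f j == i])].
  have card_S : #|S| = k.
    rewrite cardsE (card_uniqP _) ?take_uniq ?enum_uniq // size_take -cardE.
    by move: k_le; rewrite /load leq_eqVlt => /orP[/eqP ->|->]; rewrite ?ltnn.
  have cov_S : covers f S.
    by apply/fintype.subsetP => x; rewrite inE => /mem_take; rewrite mem_enum.
  rewrite (bigD1 S) ?card_S ?eqxx //= cov_S mul1r lerDl.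
  by apply: sumr_ge0 => T _; apply: mulr_ge0 => //; apply: prob_ffun_ge0.
rewrite exchange_big /=.
under eq_bigr => S /eqP card_S do rewrite prob_subset_bin card_S.
rewrite (eq_bigl (mem [set S : {set 'I_n} | #|S| == k])); last by move=> S; rewrite !inE.
by rewrite sumr_const card_draws card_ord mulr_natl.
Qed.

Lemma prob_maxload_ge_le k n :
  prob_maxload_ge p k n <= 'C(n, k)%:R * \sum_(i < m) p i ^+ k.
Proof.
rewrite mulr_sumr; apply: le_trans (ler_sum _ (fun i _ => prob_load_ge_le i k n)).
under [leRHS]eq_bigr do rewrite big_mkcond.
rewrite [leRHS]exchange_big /prob_maxload_ge big_mkcond /=.
apply: ler_sum => f _; case: ifP => [/existsP[i k_le]|_]; last first.
  by apply: sumr_ge0 => i _; case: ifP => // _; apply: prob_ffun_ge0.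
rewrite (bigD1 i) //= k_le lerDl.
by apply: sumr_ge0 => i' _; case: ifP => // _; apply: prob_ffun_ge0.
Qed.

End BallsIntoBins.

Lemma derive1_val (R : realType) (f : R -> R) (x d : R) :
  is_derive x 1 f d -> derive1 f x = d.
Proof. by move=> df; rewrite derive1E; apply: derive_val. Qed.

Section PoissonCdf.
Variables (R : realType) (k : nat).

Local Notation E y := (exp_trunc y k.+1).

(* [nlog_poisson_cdf y = - ln Pr[Poisson(y) <= k]], since
   [Pr[Poisson(y) <= k] = exp(-y) * E y]. *)
Definition nlog_poisson_cdf (y : R) : R := y - ln (E y).

Local Notation g := nlog_poisson_cdf.

Lemma nlog_poisson_cdf0 : g 0 = 0.
Proof. by rewrite /g exp_trunc0 ln1 subrr. Qed.

Lemma nlog_poisson_cdf_ge0 (y : R) : 0 <= y -> 0 <= g y.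
Proof.
move=> y_ge0; rewrite /g subr_ge0 -[leRHS]expRK.
by rewrite ler_ln ?posrE ?exp_trunc_gt0 ?expR_gt0 ?exp_trunc_le_expR.
Qed.

Lemma is_derive_nlog_poisson_cdf (x : R) : 0 <= x ->
  is_derive x 1 g (1 - (E x)^-1 * exp_trunc x k).
Proof.
move=> x_ge0.
have dlnE := is_derive1_comp (is_derive1_ln (exp_trunc_gt0 k x_ge0)) (is_derive_exp_trunc x k).
exact: is_deriveB (is_derive_id x 1) dlnE.
Qed.

Lemma pow_le_nlog_poisson_cdf (y : R) : 0 <= y -> y ^+ k.+1 <= k.+1`!%:R * (E y * g y).
Proof.
move=> y_ge0; pose h (x : R) := k.+1`!%:R * (E x * g x) - x ^+ k.+1.
have dh (x : R) : 0 <= x -> is_derive x 1 h (k.+1`!%:R * exp_trunc x k * g x).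
  move=> x_ge0.
  have dEg := is_deriveM (is_derive_exp_trunc x k) (is_derive_nlog_poisson_cdf x_ge0).
  have dpow := is_deriveX k.+1 (is_derive_id x (1 : R)).
  have -> : h = k.+1`!%:R \*: (fun x => E x * g x) - id ^+ k.+1.
    by apply/funext => z; rewrite !fctE.
  apply: is_derive_eq (is_deriveB (is_deriveZ _ dEg) dpow) _.
  have Ex_gt0 := exp_trunc_gt0 k x_ge0.
  have fact_gt0 : 0 < k`!%:R :> R by rewrite ltr0n fact_gt0.
  have scaleE (a b : R) : a *: b = a * b by [].
  rewrite !scaleE mulr1 /= exp_truncS factS natrM.
  rewrite exp_truncS in Ex_gt0.
  field; rewrite (lt0r_neq0 fact_gt0) /= lt0r_neq0 //.
  by have := mulr_gt0 Ex_gt0 fact_gt0; rewrite mulrDl divfK ?lt0r_neq0.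
suff : h 0 <= h y.
  by rewrite /h nlog_poisson_cdf0 !mulr0 expr0n /= subr0 subr_ge0.
apply: (@ger0_derive1_le_cc _ h 0 y); last 3 first.
- by rewrite in_itv /= lexx y_ge0.
- by rewrite in_itv /= lexx y_ge0.
- exact: y_ge0.
- by move=> x; rewrite in_itv /= => /andP[/ltW/dh + _] => -[].
- move=> x; rewrite in_itv /= => /andP[/ltW x_ge0 _]; rewrite (derive1_val (dh x x_ge0)).
  by rewrite mulr_ge0 ?nlog_poisson_cdf_ge0 ?mulr_ge0 ?exp_trunc_ge0.
apply: derivable_within_continuous => x; rewrite in_itv /= => /andP[x_ge0 _].
by case: (dh x x_ge0).
Qed.

Lemma nlog_poisson_cdf_div_pow_le (y w : R) : 0 < y -> y <= w ->
  g w / w ^+ k.+1 <= g y / y ^+ k.+1.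
Proof.
move=> y_gt0 le_yw; pose Phi (x : R) := g x / x ^+ k.+1.
have dPhi (x : R) : 0 < x ->
    is_derive x 1 Phi (- (k.+1`!%:R * (E x * g x) - x ^+ k.+1) / (k`!%:R * E x * x ^+ k.+2)).
  move=> x_gt0.
  have pow_neq0 : (id ^+ k.+1) x != 0 :> R by rewrite fctE expf_neq0 // lt0r_neq0.
  have dinv := is_deriveV pow_neq0 (is_deriveX k.+1 (is_derive_id x (1 : R))).
  have -> : Phi = g * (fun z => ((id ^+ k.+1) z)^-1).
    by apply/funext => z; rewrite !fctE.
  apply: is_derive_eq (is_deriveM (is_derive_nlog_poisson_cdf (ltW x_gt0)) dinv) _.
  have scaleE (a b : R) : a *: b = a * b by [].
  have fact_neq0 : k`!%:R != 0 :> R by rewrite pnatr_eq0 -lt0n fact_gt0.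
  have xk_gt0 : 0 < x ^+ k by apply: exprn_gt0.
  have denom_gt0 : 0 < exp_trunc x k * k`!%:R + x ^+ k.
    by rewrite ltr_wpDl // mulr_ge0 ?ler0n ?exp_trunc_ge0 ?ltW.
  rewrite !scaleE !fctE /= mulr1 exp_truncS factS natrM !exprS.
  by field; rewrite fact_neq0 !lt0r_neq0.
apply: (@ler0_derive1_le_cc _ Phi y w); last 3 first.
- by rewrite in_itv /= lexx le_yw.
- by rewrite in_itv /= lexx le_yw.
- exact: le_yw.
- move=> x; rewrite in_itv /= => /andP[lt_yx _].
  by case: (dPhi x (lt_trans y_gt0 lt_yx)).
- move=> x; rewrite in_itv /= => /andP[lt_yx _]; have x_gt0 := lt_trans y_gt0 lt_yx.
  have x_ge0 := ltW x_gt0.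
  rewrite (derive1_val (dPhi x x_gt0)) mulNr oppr_le0; apply: divr_ge0.
    by rewrite subr_ge0; apply: pow_le_nlog_poisson_cdf.
  by apply: mulr_ge0; [apply: mulr_ge0; [apply: ler0n|apply: exp_trunc_ge0]|apply: exprn_ge0].
apply: derivable_within_continuous => x; rewrite in_itv /= => /andP[le_yx _].
by case: (dPhi x (lt_le_trans y_gt0 le_yx)).
Qed.

Lemma exp_trunc_le_expR_div_e (y : R) : 0 <= y -> E y <= expR 1 ^+ k * expR (y / expR 1).
Proof.
move=> y_ge0; have e_gt0 : 0 < expR 1 :> R := expR_gt0 1.
apply: le_trans (ler_wpM2l (exprn_ge0 _ (ltW e_gt0))
  (exp_trunc_le_expR k.+1 (divr_ge0 y_ge0 (ltW e_gt0)))).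
rewrite /exp_trunc mulr_sumr; apply: ler_sum => l _.
have el_gt0 : 0 < expR 1 ^+ l :> R by apply: exprn_gt0.
have el_le : expR 1 ^+ l <= expR 1 ^+ k :> R.
  have e_gt1 : 1 < expR 1 :> R by rewrite expR_gt1 ltr01.
  by apply: ler_weXn2l; [apply: ltW | rewrite -ltnS].
have fact_neq0 : l`!%:R != 0 :> R by rewrite pnatr_eq0 -lt0n fact_gt0.
rewrite [leRHS](_ : _ = expR 1 ^+ k / expR 1 ^+ l * (y ^+ l / l`!%:R)); last first.
  by rewrite expr_div_n; field; rewrite fact_neq0 lt0r_neq0.
rewrite -[leLHS]mul1r; apply: ler_wpM2r; first exact: exp_term_ge0.
by rewrite ler_pdivlMr // mul1r.
Qed.

Lemma nlog_poisson_cdf_ge_linear (y : R) : 0 <= y -> (1 - (expR 1)^-1) * y - k%:R <= g y.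
Proof.
move=> y_ge0; have := exp_trunc_le_expR_div_e y_ge0.
rewrite -expRM_natl mulr1 -expRD -ler_ln ?posrE ?exp_trunc_gt0 ?expR_gt0 // expRK.
by rewrite /g mulrBl mul1r [_^-1 * y]mulrC; lra.
Qed.

(* Each g (y i) is bounded below by G (y i / w)^(k+1): for y i > w by the
   growth hypothesis, for y i <= w because g y / y^(k+1) is nonincreasing. *)
Lemma sum_nlog_poisson_cdf_ge (I : finType) (y : I -> R) (w G : R) :
  (forall i, 0 <= y i) -> 0 < w -> \sum_i y i ^+ k.+1 = w ^+ k.+1 ->
  (forall z, w <= z -> G <= g z) -> G <= \sum_i g (y i).
Proof.
move=> y_ge0 w_gt0 sum_pow G_le.
have [[i lt_wy]|] := pselect (exists i, w < y i).
  rewrite (bigD1 i) //=; apply: le_trans (G_le _ (ltW lt_wy)) _; rewrite lerDl.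
  by apply: sumr_ge0 => j _; apply: nlog_poisson_cdf_ge0.
move=> /forallNP le_yw.
have wk_gt0 : 0 < w ^+ k.+1 by apply: exprn_gt0.
have -> : G = \sum_i G * (y i ^+ k.+1 / w ^+ k.+1).
  by rewrite -mulr_sumr -mulr_suml sum_pow divff ?mulr1 // lt0r_neq0.
apply: ler_sum => i _; have yi_le : y i <= w by rewrite leNgt; apply/negP/le_yw.
have [->|yi_neq0] := eqVneq (y i) 0.
  by rewrite expr0n /= mul0r mulr0 nlog_poisson_cdf0.
have yi_gt0 : 0 < y i by rewrite lt0r yi_neq0 y_ge0.
apply: le_trans (_ : g w * (y i ^+ k.+1 / w ^+ k.+1) <= _).
  by apply: ler_wpM2r; [rewrite divr_ge0 ?exprn_ge0 ?ltW | apply: G_le].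
rewrite mulrA mulrAC -[leRHS](divfK (expf_neq0 k.+1 yi_neq0)).
by apply: ler_wpM2r; [apply: exprn_ge0; apply: ltW | apply: nlog_poisson_cdf_div_pow_le].
Qed.

End PoissonCdf.

Lemma ffact_leq_expn n k : (n ^_ k <= n ^ k)%N.
Proof. by elim: k => // k IHk; rewrite ffactnSr expnSr leq_mul ?leq_subr. Qed.

Lemma bin_le_pow_div_fact (R : numFieldType) n k : 'C(n, k)%:R <= n%:R ^+ k / k`!%:R :> R.
Proof.
rewrite ler_pdivlMr ?ltr0n ?fact_gt0 // -natrM bin_ffact -natrX ler_nat.
exact: ffact_leq_expn.
Qed.

Lemma pow_div_fact_le_expR (R : realType) k : k%:R ^+ k / k`!%:R <= expR 1 ^+ k :> R.
Proof.
rewrite -expRM_natl mulr1; apply: le_trans (exp_trunc_le_expR k.+1 (ler0n _ k)).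
by rewrite exp_truncS lerDr exp_trunc_ge0.
Qed.

Section MaxLoad.
Variables (R : realType) (m : nat) (p : 'I_m -> R).
Hypothesis p_ge0 : forall i, 0 <= p i.
Hypothesis p_sum1 : \sum_(i < m) p i = 1.

Lemma sum_pow_gt0 k : 0 < \sum_(i < m) p i ^+ k.
Proof.
have [[i pi_gt0]|/forallNP pi_le0] := pselect (exists i, 0 < p i).
  rewrite (bigD1 i) //=; apply: lt_le_trans (exprn_gt0 k pi_gt0) _.
  by rewrite lerDl; apply: sumr_ge0 => j _; apply: exprn_ge0.
have : \sum_(i < m) p i = 0.
  by apply: big1 => i _; apply/eqP; rewrite eq_le p_ge0 andbT leNgt; apply/negP/pi_le0.
by rewrite p_sum1 => /eqP; rewrite oner_eq0.
Qed.

Lemma knorm_pow k : (0 < k)%N -> knorm p k ^+ k = \sum_(i < m) p i ^+ k.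
Proof.
move=> k_gt0; have k_neq0 : k%:R != 0 :> R by rewrite pnatr_eq0 -lt0n.
have q_ge0 := ltW (sum_pow_gt0 k).
by rewrite /knorm -powR_mulrn ?powR_ge0 // -powRrM mulVf // powRr1.
Qed.

Lemma nstar_gt0 k : (0 < k)%N -> 0 < nstar p k.
Proof. by move=> k_gt0; rewrite divr_gt0 ?ltr0n ?powR_gt0 ?sum_pow_gt0. Qed.

Lemma nstar_pow k : (0 < k)%N -> nstar p k ^+ k * \sum_(i < m) p i ^+ k = k%:R ^+ k.
Proof.
by move=> k_gt0; rewrite /nstar expr_div_n knorm_pow // divfK // lt0r_neq0 ?sum_pow_gt0.
Qed.

Lemma prob_Tk_le_small k delta : (0 < k)%N -> 0 < delta < 1 ->
  prob_Tk_le p k (delta / expR 1 * nstar p k) <= delta.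
Proof.
move=> k_gt0 /andP[delta_gt0 delta_lt1].
have e_gt0 : 0 < expR 1 :> R := expR_gt0 1.
set q := \sum_(i < m) p i ^+ k; set x := delta / expR 1 * nstar p k.
have x_ge0 : 0 <= x.
  by apply: mulr_ge0; [apply: divr_ge0; apply: ltW|apply: ltW; apply: nstar_gt0].
rewrite /prob_Tk_le; set n := Num.truncn x.
have n_le_x : n%:R <= x by case/andP: (truncn_itv x_ge0).
apply: le_trans (prob_maxload_ge_le p_ge0 p_sum1 k n) _; rewrite -/q.
have q_ge0 : 0 <= q by rewrite ltW ?sum_pow_gt0.
apply: le_trans (_ : x ^+ k / k`!%:R * q <= _).
  rewrite ler_wpM2r //; apply: le_trans (bin_le_pow_div_fact _ n k) _.
  by rewrite ler_wpM2r ?invr_ge0 ?ler0n // lerXn2r ?nnegrE ?ler0n.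
have xq : x ^+ k * q = (delta / expR 1) ^+ k * k%:R ^+ k.
  by rewrite /x exprMn -mulrA nstar_pow.
rewrite mulrAC xq -mulrA.
apply: le_trans (_ : (delta / expR 1) ^+ k * expR 1 ^+ k <= _).
  apply: ler_wpM2l; last exact: pow_div_fact_le_expR.
  by apply: exprn_ge0; apply: divr_ge0; apply: ltW.
by rewrite -exprMn divfK ?lt0r_neq0 // ler_iXnr // ltW.
Qed.

Lemma prob_loads_lt_le_expR k n (t w : R) : (0 < k)%N ->
  0 <= t -> t <= 3/4 * n.+1%:R -> 0 < w ->
  w ^+ k = t ^+ k * \sum_(i < m) p i ^+ k ->
  prob_loads_lt p n (fun=> k) <= 4 * expR (k%:R - 1 - (1 - (expR 1)^-1) * w).
Proof.
case: k => // k _ t_ge0 t_le w_gt0 w_pow; rewrite -[k.+1%:R]natr1 addrK.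
set G := (1 - (expR 1)^-1) * w - k%:R.
have e_gt1 : 1 < expR 1 :> R by rewrite expR_gt1 ltr01.
have inv_e_le1 : (expR 1)^-1 <= 1 :> R by rewrite (invf_le1 (lt_trans ltr01 e_gt1)) ltW.
have y_ge0 i : 0 <= p i * t by rewrite mulr_ge0.
have sum_pow : \sum_i (p i * t) ^+ k.+1 = w ^+ k.+1.
  by rewrite w_pow mulr_sumr; apply: eq_bigr => i _; rewrite exprMn mulrC.
have G_le z : w <= z -> G <= nlog_poisson_cdf k z.
  move=> le_wz; have z_ge0 := le_trans (ltW w_gt0) le_wz.
  apply: le_trans (nlog_poisson_cdf_ge_linear k z_ge0).
  by rewrite lerD2r ler_wpM2l // subr_ge0.
have prod_exp_trunc : \prod_i exp_trunc (p i * t) k.+1 =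
    expR (t - \sum_i nlog_poisson_cdf k (p i * t)).
  have sum_y : \sum_i p i * t = t by rewrite -mulr_suml p_sum1 mul1r.
  rewrite -[X in expR (X - _)]sum_y -sumrB expR_sum.
  apply: eq_bigr => i _; rewrite /nlog_poisson_cdf opprB addrC subrK lnK //.
  by rewrite posrE exp_trunc_gt0.
rewrite -[k%:R - _]opprB -/G -(ler_pM2r (exp_trunc_gt0 n t_ge0)).
apply: le_trans (prob_loads_lt_mul_exp_trunc_le p_ge0 p_sum1 _ n t_ge0) _.
rewrite prod_exp_trunc mulrAC; apply: le_trans (_ : expR t * expR (- G) <= _).
  by rewrite -expRD ler_expR lerD2l lerN2 (sum_nlog_poisson_cdf_ge y_ge0 w_gt0 sum_pow G_le).
by apply: ler_wpM2r; [apply: expR_ge0 | apply: expR_le_4exp_trunc].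
Qed.

Lemma prob_T1_le_large delta : 0 < delta < 1 ->
  1 - delta <= prob_Tk_le p 1 (Num.max (expR 1 ^+ 2) (2 * ln delta^-1) * nstar p 1).
Proof.
move=> /andP[delta_gt0 _].
have nstar1 : nstar p 1 = 1.
  have := nstar_pow (ltnSn 0); rewrite (eq_bigr _ (fun i _ => expr1 (p i))) p_sum1.
  by rewrite !expr1 mulr1.
set c := Num.max _ _; have c_ge_e2 : expR 1 ^+ 2 <= c by rewrite le_max lexx.
have c_ge1 : 1 <= c by apply: le_trans c_ge_e2; have := @expR1_ge R; rewrite expr2; nra.
rewrite nstar1 mulr1 /prob_Tk_le (prob_maxload_geE p_sum1).
have /andP[_] := truncn_itv (le_trans ler01 c_ge1).
case: (Num.truncn c) => [|n] c_lt; first lra.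
by rewrite prob_loads_lt_le1; lra.
Qed.

Lemma prob_Tk_le_large k delta : (1 < k)%N -> 0 < delta < 1 ->
  1 - delta <= prob_Tk_le p k (Num.max (expR 1 ^+ 2) (2 * ln delta^-1) * nstar p k).
Proof.
move=> k_gt1 /andP[delta_gt0 delta_lt1]; have k_gt0 := ltnW k_gt1.
have e_ge := @expR1_ge R; have e_gt0 : 0 < expR 1 :> R := expR_gt0 1.
set c := Num.max _ _.
have c_ge_e2 : expR 1 ^+ 2 <= c by rewrite le_max lexx.
have c_ge_ln : 2 * ln delta^-1 <= c by rewrite le_max lexx orbT.
have c_ge : 729/100 <= c by apply: le_trans c_ge_e2; rewrite expr2; nra.
set x := c * nstar p k.
have x_ge0 : 0 <= x by apply: mulr_ge0; [lra | apply: ltW; apply: nstar_gt0].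
rewrite /prob_Tk_le (prob_maxload_geE p_sum1); set n := Num.truncn x.
have /andP[_ x_lt] := truncn_itv x_ge0; rewrite -/n in x_lt.
suff : prob_loads_lt p n (fun=> k) <= delta by lra.
have k_ge2 : 2 <= k%:R :> R by rewrite ler_nat.
set w := 3/4 * c * k%:R.
have w_pow : w ^+ k = (3/4 * x) ^+ k * \sum_(i < m) p i ^+ k.
  by rewrite /w /x [LHS]exprMn -(nstar_pow k_gt0) mulrA -exprMn [in RHS]mulrA.
apply: le_trans (prob_loads_lt_le_expR k_gt0 _ _ _ w_pow) _; [lra | lra | |].
  by rewrite /w !mulr_gt0 //; lra.
have inv_e_le : (expR 1)^-1 <= 10/27 :> R by rewrite -div1r ler_pdivrMr //; lra.
have exponent_le : k%:R - 1 - (1 - (expR 1)^-1) * w <= - 2 - c / 2.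
  have h1 : 0 <= (10/27 - (expR 1)^-1) * (c * k%:R) by rewrite mulr_ge0 ?mulr_ge0; lra.
  have h2 : 0 <= (c - 729/100) * (17 * k%:R / 36 - 1/2) by rewrite mulr_ge0; lra.
  by rewrite /w; lra.
have four_le : 4 <= expR 2 :> R by rewrite -[2]mulr1 expRM_natl expr2; nra.
have ln_delta : - (c / 2) <= ln delta by move: c_ge_ln; rewrite lnV ?posrE //; lra.
apply: le_trans (_ : 4 * expR (- 2 - c / 2) <= _).
  by apply: ler_wpM2l; [lra | rewrite ler_expR].
rewrite expRD mulrA -[leRHS]mul1r.
apply: ler_pM; [by rewrite mulr_ge0 ?expR_ge0; lra | exact: expR_ge0 | |].
  by rewrite expRN ler_pdivrMr ?expR_gt0 // mul1r.
by rewrite -[leRHS](@lnK _ delta) ?posrE // ler_expR.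
Qed.

End MaxLoad.

Theorem corollary5 (R : realType) (m : nat) (p : 'I_m -> R) (k : nat) (delta : R) :
  (2 <= m)%N ->
  (forall i, 0 <= p i) -> \sum_(i < m) p i = 1 ->
  (1 <= k)%N ->
  0 < delta < 1 ->
  prob_Tk_le p k ((delta / expR 1) * nstar p k) <= delta /\
  1 - delta <= prob_Tk_le p k (Num.max (expR 1 ^+ 2) (2 * ln delta^-1) * nstar p k).
Proof.
(* The bounds hold for any number of bins. *)
move=> _ p_ge0 p_sum1 k_gt0 delta_01.
split; first exact: prob_Tk_le_small.
case: k k_gt0 => [//|[_|k _]]; first exact: prob_T1_le_large.
exact: prob_Tk_le_large.
Qed.
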